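(* Let $(\mathcal A,d)$ be a DGA and let $a,b_1,\dots,b_n\in\mathcal A$ be closed with $|a|$ even and each $a\wedge b_i$ exact. If $a',b_1',\dots,b_n'\in\mathcal A$ are closed with $[a']=[a]$ and $[b_i']=[b_i]$ in $H(\mathcal A)$, then $\langle a';b_1',\dots,b_n'\rangle$ is defined and $\langle a';b_1',\dots,b_n'\rangle=\langle a;b_1,\dots,b_n\rangle$. That is, the $a$-Massey product depends only on the cohomology classes $[a],[b_i]$.
   Context: A DGA is a graded-commutative differential graded algebra over $\mathbb R$; $|x|$ denotes degree and $\overline{x}=(-1)^{|x|}x$. Given closed $a,b_1,\dots,b_n\in\mathcal A$ with $|a|$ even and each $a\wedge b_i$ exact, the $a$-Massey product is the subset of $H(\mathcal A)$ $$\langle a;b_1,\dots,b_n\rangle=\Big\{\Big[\sum_{i=1}^n\overline{\xi_1}\wedge\cdots\wedge\overline{\xi_{i-1}}\wedge b_i\wedge\xi_{i+1}\wedge\cdots\wedge\xi_n\Big]\ :\ d\xi_i=a\wedge b_i\Big\}$$ (the elements inside the brackets are closed). *)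

From HB Require Import structures.
From mathcomp Require Import all_boot all_order all_algebra.
From mathcomp Require Import reals.
Set Implicit Arguments. Unset Strict Implicit. Unset Printing Implicit Defensive.
Import Order.TTheory GRing.Theory Num.Theory.
Local Open Scope ring_scope.

Definition sgnz {R : realType} (z : int) : R := (-1) ^+ `|z|%N.

(* A (Z-graded) graded-commutative differential graded algebra over R:
   an associative unital R-algebra A, together with
   - deg k : the subspace A^k of homogeneous elements of degree k,
     with A = (+)_k A^k (direct sum: spanning + independence),
   - a linear differential d of degree +1, d o d = 0,
     satisfying the graded Leibniz rule,
   - graded commutativity x y = (-1)^{|x||y|} y x. *)
Record is_dga (R : realType) (A : algType R) (deg : int -> pred A)
    (d : A -> A) : Prop := {
  dga_hom0 : forall k, 0 \in deg k;
  dga_homL : forall k (c : R) x y, x \in deg k -> y \in deg k ->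
               c *: x + y \in deg k;
  dga_span : forall x : A, exists (s : seq int) (xs : int -> A),
               (forall k, xs k \in deg k) /\ x = \sum_(k <- s) xs k;
  dga_indep : forall (s : seq int) (xs : int -> A), uniq s ->
               (forall k, xs k \in deg k) -> \sum_(k <- s) xs k = 0 ->
               forall k, k \in s -> xs k = 0;
  dga_hom1 : 1 \in deg 0;
  dga_homM : forall p q x y, x \in deg p -> y \in deg q -> x * y \in deg (p + q);
  dga_lin : forall (c : R) x y, d (c *: x + y) = c *: d x + d y;
  dga_homd : forall p x, x \in deg p -> d x \in deg (p + 1);
  dga_dd : forall x, d (d x) = 0;
  dga_leibniz : forall p q x y, x \in deg p -> y \in deg q ->
               d (x * y) = d x * y + sgnz p *: (x * d y);
  dga_gcomm : forall p q x y, x \in deg p -> y \in deg q ->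
               x * y = sgnz (p * q) *: (y * x)
}.

Definition closed_el {A : zmodType} (d : A -> A) (x : A) := d x = 0.
Definition exact_el {A : zmodType} (d : A -> A) (x : A) := exists y, x = d y.
(* [x] = [y] in H(A) = ker d / im d (for closed x, y). *)
Definition cohomologous {A : zmodType} (d : A -> A) (x y : A) :=
  exists z, x - y = d z.

(* The element  sum_i  bar(xi_1) ... bar(xi_{i-1}) b_i xi_{i+1} ... xi_n,
   where bar(x) = (-1)^{|x|} x and |xi_j| = p + q_j - 1. *)
Definition massey_elt (R : realType) (A : algType R) (n : nat)
    (p : int) (q : 'I_n -> int) (b xi : 'I_n -> A) : A :=
  \sum_(i < n)
    ((\prod_(j < n | (j < i)%N) (sgnz (p + q j - 1) *: xi j)) * b i
      * \prod_(j < n | (i < j)%N) xi j).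

Definition massey_rep (R : realType) (A : algType R) (deg : int -> pred A)
    (d : A -> A) (n : nat) (p : int) (q : 'I_n -> int) (a : A) (b : 'I_n -> A)
    (x : A) : Prop :=
  exists xi : 'I_n -> A,
    (forall i, xi i \in deg (p + q i - 1)) /\
    (forall i, d (xi i) = a * b i) /\
    x = massey_elt p q b xi.

Definition in_massey (R : realType) (A : algType R) (deg : int -> pred A)
    (d : A -> A) (n : nat) (p : int) (q : 'I_n -> int) (a : A) (b : 'I_n -> A)
    (c : A) : Prop :=
  exists x, massey_rep deg d p q a b x /\ cohomologous d c x.

From HB Require Import structures.
From mathcomp Require Import all_boot all_order all_algebra.
From mathcomp Require Import reals.
Import Order.TTheory GRing.Theory Num.Theory.
Local Open Scope ring_scope.
Set Implicit Arguments. Unset Strict Implicit. Unset Printing Implicit Defensive.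

(* Write a' = a + d u and b'_i = b_i + d v_i with u, v_i homogeneous, so that
   a' b'_i = a b_i + d (u b_i + a' v_i).  If (xi_i) is a defining system for
   <a; b>, then (xi_i + u b_i) is one for <a'; b> with the same Massey element:
   the cross terms cancel by graded commutativity and u^2 = 0, u being of odd
   degree.  Next (xi_i + a' v_i) is a defining system for <a'; b'>, and since
   a' is closed, even and hence central, the Massey element only changes by the
   coboundary of v_1 xi_2...xi_n + ...  Swapping the roles (-u, -v_i) gives the
   converse inclusion. *)

Section Signs.
Variable R : realType.

Lemma sgnzE (z : int) : sgnz z = (-1 : R) ^ z.
Proof. by case: z => n; rewrite /sgnz //= /exprz -exprVn invrN1. Qed.

Lemma sgnzD (x y : int) : sgnz (x + y) = sgnz x * sgnz y :> R.
Proof. by rewrite !sgnzE expfzDr // oppr_eq0 oner_eq0. Qed.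

Lemma sgnzN1 : sgnz (-1) = -1 :> R.
Proof. by rewrite /sgnz /= expr1. Qed.

Lemma sgnz_even (p : int) : ~~ odd `|p|%N -> sgnz p = 1 :> R.
Proof. by move=> ev_p; rewrite /sgnz -signr_odd (negbTE ev_p). Qed.

Lemma sgnzMl_even (x y : int) : sgnz x = 1 :> R -> sgnz (x * y) = 1 :> R.
Proof. by move=> sx; rewrite !sgnzE -exprz_exp -sgnzE sx exp1rz. Qed.

Lemma sgnzMr_odd (x y : int) : sgnz y = -1 :> R -> sgnz (x * y) = sgnz x :> R.
Proof. by move=> sy; rewrite !sgnzE mulrC -exprz_exp -sgnzE sy. Qed.

End Signs.

Lemma sum_group_by (V : nmodType) (I : eqType) (S s : seq I) (F : I -> V) :
  uniq S -> {subset s <= S} ->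
  \sum_(k <- S) \sum_(j <- s | j == k) F j = \sum_(j <- s) F j.
Proof.
move=> uS sS; rewrite (exchange_big_dep predT) //=; apply: eq_big_seq => j sj.
rewrite big_mkcond (bigD1_seq j) ?sS //= eqxx big1 ?addr0 // => k.
by rewrite eq_sym => /negbTE ->.
Qed.

Lemma subr_pairwise (V : zmodType) (x y z w u v : V) :
  (x + y) + (z + w) - (u + v) = (x - u) + (z - v) + (y + w).
Proof. by rewrite opprD (addrACA x y z w) (addrACA x (-u) z (-v)) [LHS]addrAC. Qed.

Definition ord_tail (T : Type) (n : nat) (f : 'I_n.+1 -> T) : 'I_n -> T :=
  fun j => f (lift ord0 j).

Section MasseyElement.
Variables (R : realType) (A : algType R).

Lemma massey_elt0 p q (b xi : 'I_0 -> A) : massey_elt p q b xi = 0.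
Proof. by rewrite /massey_elt big_ord0. Qed.

Lemma massey_elt_recl n p (q : 'I_n.+1 -> int) (b xi : 'I_n.+1 -> A) :
  massey_elt p q b xi = b ord0 * \prod_(j < n) ord_tail xi j
    + (sgnz (p + q ord0 - 1) *: xi ord0)
      * massey_elt p (ord_tail q) (ord_tail b) (ord_tail xi).
Proof.
rewrite /massey_elt big_ord_recl; congr (_ + _).
  by rewrite big_pred0 // mul1r big_mkcond big_ord_recl /= mul1r.
rewrite mulr_sumr; apply: eq_bigr => i _.
rewrite (big_mkcond (fun j : 'I_n.+1 => (j < lift ord0 i)%N)) big_ord_recl /=.
rewrite (big_mkcond (fun j : 'I_n.+1 => (lift ord0 i < j)%N)) big_ord_recl /=.
rewrite mul1r !mulrA; congr (_ * _ * _); last rewrite [RHS]big_mkcond.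
  by congr (_ * _); rewrite [RHS]big_mkcond; apply: eq_bigr => j _.
by apply: eq_bigr => j _.
Qed.

End MasseyElement.

Section DGA.
Variables (R : realType) (A : algType R) (deg : int -> pred A) (d : A -> A).
Hypothesis HA : is_dga deg d.

HB.instance Definition _ := GRing.isLinear.Build R A A *:%R d (dga_lin HA).

Fact deg_submod_closed k : GRing.submod_closed (deg k).
Proof. by split; [exact: (dga_hom0 HA) | move=> c x y; exact: (dga_homL HA)]. Qed.

HB.instance Definition _ k :=
  GRing.isSubmodClosed.Build R A (deg k) (deg_submod_closed k).

Lemma hom_component K x (s : seq int) (xs : int -> A) :
  x \in deg K -> (forall k, xs k \in deg k) -> x = \sum_(k <- s) xs k ->
  x = \sum_(k <- s | k == K) xs k.
Proof.
move=> xK xs_hom ex; pose S := undup (K :: s).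
pose zs k := \sum_(j <- s | j == k) xs j - \sum_(j <- [:: K] | j == k) x.
have zs_hom k : zs k \in deg k.
  apply: rpredB; first by apply: rpred_sum => j /eqP ->.
  by rewrite big_cons big_nil; case: eqP => [<-|_]; rewrite ?addr0 ?rpred0.
have sub_S t : {subset t <= K :: s} -> {subset t <= S}.
  by move=> tKs j /tKs; rewrite mem_undup.
have zs_sum : \sum_(k <- S) zs k = 0.
  rewrite sumrB !sum_group_by ?undup_uniq ?big_seq1 -?ex ?subrr //.
    by apply: sub_S => j; rewrite mem_seq1 => /eqP ->; rewrite mem_head.
  by apply: sub_S => j js; rewrite in_cons js orbT.
have /(_ K) := dga_indep HA (undup_uniq _) zs_hom zs_sum.
rewrite mem_undup mem_head /zs big_cons eqxx big_nil addr0 => /(_ isT) /eqP.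
by rewrite subr_eq0 => /eqP.
Qed.

(* The witnesses of [exact_el] and [cohomologous] need not be homogeneous,
   whereas the defining systems of [massey_rep] must be. *)
Lemma exact_hom_primitive K x w :
  x \in deg K -> x = d w -> exists2 w', w' \in deg (K - 1) & x = d w'.
Proof.
move=> xK ex; have [s [ws [ws_hom ew]]] := dga_span HA w.
pose ys m := d (ws (m - 1)).
have ys_hom m : ys m \in deg m by rewrite -[m in deg m](subrK 1) dga_homd.
have ex' : x = \sum_(m <- [seq j + 1 | j <- s]) ys m.
  by rewrite ex ew linear_sum big_map; apply: eq_bigr => j _; rewrite /ys addrK.
rewrite (hom_component xK ys_hom ex') /ys -linear_sum.
exists (\sum_(m <- [seq j + 1 | j <- s] | m == K) ws (m - 1)) => //.
by apply: rpred_sum => m /eqP ->.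
Qed.

Lemma cohomologous_hom_primitive K x y w :
  x \in deg K -> y \in deg K -> x - y = d w ->
  exists2 w', w' \in deg (K - 1) & x - y = d w'.
Proof. by move=> xK yK; apply: exact_hom_primitive; rewrite rpredB. Qed.

Lemma leibniz k x y :
  x \in deg k -> d (x * y) = d x * y + sgnz k *: (x * d y).
Proof.
move=> xk; have [s [ys [ys_hom ->]]] := dga_span HA y.
rewrite mulr_sumr !linear_sum mulr_sumr mulr_sumr scaler_sumr -big_split /=.
by apply: eq_bigr => j _; exact: dga_leibniz xk (ys_hom j).
Qed.

Lemma d1 : d 1 = 0.
Proof.
have := leibniz 1 (dga_hom1 HA); rewrite !mulr1 mul1r /sgnz expr0 scale1r => h.
by apply: (addrI (d 1)); rewrite addr0 -h.
Qed.

Lemma d_mulr_closed k u y : u \in deg k -> d y = 0 -> d (u * y) = d u * y.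
Proof. by move=> uk dy; rewrite (leibniz _ uk) dy mulr0 scaler0 addr0. Qed.

Lemma d_mull_closed_even p x y :
  sgnz p = 1 :> R -> x \in deg p -> d x = 0 -> d (x * y) = x * d y.
Proof. by move=> sp xp dx; rewrite (leibniz _ xp) dx mul0r add0r sp scale1r. Qed.

Lemma even_hom_comm k x y : sgnz k = 1 :> R -> x \in deg k -> x * y = y * x.
Proof.
move=> sk xk; have [s [ys [ys_hom ->]]] := dga_span HA y.
rewrite mulr_sumr mulr_suml; apply: eq_bigr => j _.
by rewrite (dga_gcomm HA xk (ys_hom j)) (sgnzMl_even _ sk) scale1r.
Qed.

Lemma odd_hom_sqr0 k u : sgnz k = -1 :> R -> u \in deg k -> u * u = 0.
Proof.
move=> sk uk; have := dga_gcomm HA uk uk; rewrite (sgnzMr_odd _ sk) sk scaleN1r.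
move/eqP; rewrite -subr_eq0 opprK -mulr2n -scaler_nat scaler_eq0.
by rewrite pnatr_eq0 => /eqP.
Qed.

Lemma d_mul_shift p a a' u (b b' v : A) :
  sgnz p = 1 :> R -> a' \in deg p -> d a' = 0 -> d b = 0 ->
  u \in deg (p - 1) -> a' - a = d u -> b' - b = d v ->
  d (u * b + a' * v) = a' * b' - a * b.
Proof.
move=> sp a'p da' db up ea ev.
rewrite linearD /= (d_mulr_closed up db) (d_mull_closed_even _ sp a'p da') -ea -ev.
by rewrite mulrBl mulrBr addrC addrA subrK.
Qed.

Lemma exact_mul_shift p a a' u (b b' v : A) :
  sgnz p = 1 :> R -> a' \in deg p -> d a' = 0 -> d b = 0 ->
  u \in deg (p - 1) -> a' - a = d u -> b' - b = d v ->
  exact_el d (a * b) -> exact_el d (a' * b').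
Proof.
move=> sp a'p da' db up ea ev [y ey].
exists (y + (u * b + a' * v)).
by rewrite linearD /= -ey (d_mul_shift sp a'p da' db up ea ev) subrKC.
Qed.

Section DefiningSystems.
Variables (p : int) (a : A).
Hypotheses (p_even : sgnz p = 1 :> R) (a_hom : a \in deg p).

Lemma d_prod_defining n (q : 'I_n -> int) (b xi : 'I_n -> A) :
  (forall i, xi i \in deg (p + q i - 1)) -> (forall i, d (xi i) = a * b i) ->
  d (\prod_(j < n) xi j) = a * massey_elt p q b xi.
Proof.
elim: n q b xi => [|n IH] q b xi xi_hom dxi.
  by rewrite big_ord0 massey_elt0 d1 mulr0.
rewrite big_ord_recl massey_elt_recl (leibniz _ (xi_hom ord0)) dxi.
rewrite (IH _ _ _ (fun j => xi_hom _) (fun j => dxi _)) mulrDr !mulrA -scalerAr -scalerAl.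
by rewrite -(even_hom_comm (xi ord0) p_even a_hom).
Qed.

Lemma shift_defining_by_mul_b u n (q : 'I_n -> int) (b xi : 'I_n -> A) :
  u \in deg (p - 1) ->
  (forall i, xi i \in deg (p + q i - 1)) -> (forall i, b i \in deg (q i)) ->
  \prod_(j < n) (xi j + u * b j) = \prod_(j < n) xi j + u * massey_elt p q b xi
  /\ massey_elt p q b (fun i => xi i + u * b i) = massey_elt p q b xi.
Proof.
move=> u_hom; have u_odd : sgnz (p - 1) = -1 :> R by rewrite sgnzD p_even sgnzN1 mul1r.
have uu : u * u = 0 := odd_hom_sqr0 u_odd u_hom.
elim: n q b xi => [|n IH] q b xi xi_hom b_hom.
  by rewrite !big_ord0 !massey_elt0 mulr0 addr0.
have [IH1 IH2] := IH (ord_tail q) (ord_tail b) (ord_tail xi)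
  (fun j => xi_hom _) (fun j => b_hom _).
pose e0 : R := sgnz (p + q ord0 - 1).
have xi0_u : xi ord0 * u = e0 *: (u * xi ord0).
  by rewrite (dga_gcomm HA (xi_hom ord0) u_hom) (sgnzMr_odd _ u_odd).
have b0_u : b ord0 * u = - e0 *: (u * b ord0).
  rewrite (dga_gcomm HA (b_hom ord0) u_hom) (sgnzMr_odd _ u_odd) /e0.
  by rewrite -addrA !sgnzD p_even sgnzN1 mul1r mulrN1 opprK.
rewrite !big_ord_recl !massey_elt_recl /= -/e0 IH1 IH2.
set M := massey_elt p (ord_tail q) (ord_tail b) (ord_tail xi).
split.
  have xi0_uM : xi ord0 * (u * M) = u * ((e0 *: xi ord0) * M).
    by rewrite mulrA xi0_u -!scalerAl -scalerAr mulrA.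
  have ub0_uM : u * b ord0 * (u * M) = 0.
    by rewrite -mulrA (mulrA (b ord0)) b0_u -scalerAl -scalerAr !mulrA uu !mul0r scaler0.
  rewrite mulrDl !mulrDr xi0_uM ub0_uM addr0 !mulrA -!addrA.
  by congr (_ + _); exact: addrC.
rewrite mulrDr scalerDr mulrDl -!addrA; congr (_ + _).
by rewrite mulrA b0_u -!scalerAl addrCA scaleNr addNr addr0.
Qed.

Lemma shift_defining_by_mul_a n (q : 'I_n -> int) (b b' xi v : 'I_n -> A) :
  d a = 0 ->
  (forall i, xi i \in deg (p + q i - 1)) -> (forall i, v i \in deg (q i - 1)) ->
  (forall i, d (xi i) = a * b i) -> (forall i, b' i - b i = d (v i)) ->
  exists E, \prod_(j < n) (xi j + a * v j) = \prod_(j < n) xi j + a * E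
  /\ massey_elt p q b' (fun i => xi i + a * v i) - massey_elt p q b xi = d E.
Proof.
move=> da; elim: n q b b' xi v => [|n IH] q b b' xi v xi_hom v_hom dxi ev.
  by exists 0; rewrite !big_ord0 !massey_elt0 mulr0 addr0 subr0 raddf0.
have [E [IH1 IH2]] := IH (ord_tail q) (ord_tail b) (ord_tail b') (ord_tail xi)
  (ord_tail v) (fun j => xi_hom _) (fun j => v_hom _) (fun j => dxi _) (fun j => ev _).
pose e0 : R := sgnz (p + q ord0 - 1).
have sv0 : sgnz (q ord0 - 1) = e0 by rewrite /e0 -addrA [in RHS]sgnzD p_even mul1r.
pose z0 := xi ord0 + a * v ord0.
have z0_hom : z0 \in deg (p + q ord0 - 1).
  by rewrite rpredD ?xi_hom // -addrA (dga_homM HA a_hom (v_hom ord0)).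
have z0_xi0 : z0 - xi ord0 = a * v ord0 by rewrite /z0 addrAC subrr add0r.
have dz0 : d z0 = a * b' ord0.
  by rewrite linearD /= (d_mull_closed_even _ p_even a_hom da) dxi -ev -mulrDr subrKC.
have dP := d_prod_defining (fun j => xi_hom (lift ord0 j)) (fun j => dxi (lift ord0 j)).
have ca x : a * x = x * a := even_hom_comm x p_even a_hom.
rewrite !big_ord_recl !massey_elt_recl /= -/e0 -/z0 [\prod_(j < n) _]IH1.
move: IH2 dP; set P := \prod_(j < n) _; set M := massey_elt p _ (ord_tail b) _.
set M' := massey_elt _ _ _ _ => IH2 dP.
exists (v ord0 * P + z0 * E); split.
  by rewrite !mulrDr {1}/z0 mulrDl -!addrA !mulrA (ca z0).
have -> : M' = M + d E by rewrite -IH2 addrC subrK.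
rewrite [d (_ + _)]linearD /= (leibniz _ (v_hom ord0)) (leibniz _ z0_hom) dP sv0 -ev.
rewrite dz0 -/e0 !mulrDr subr_pairwise -!mulrBl -scalerBr z0_xi0.
congr (_ + _ + _); first by rewrite -scalerAl (mulrA (v ord0)) -ca.
by rewrite mulrA ca scalerAl.
Qed.

End DefiningSystems.

Lemma in_massey_shift n p (q : 'I_n -> int) (a a' u : A) (b b' v : 'I_n -> A) c :
  sgnz p = 1 :> R -> a' \in deg p -> d a' = 0 ->
  (forall i, b i \in deg (q i)) -> (forall i, d (b i) = 0) ->
  u \in deg (p - 1) -> a' - a = d u ->
  (forall i, v i \in deg (q i - 1)) -> (forall i, b' i - b i = d (v i)) ->
  in_massey deg d p q a b c -> in_massey deg d p q a' b' c.
Proof.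
move=> sp a'p da' b_hom db u_hom ea v_hom ev [x [[xi [xi_hom [dxi ->]]] [w ew]]].
pose z i := xi i + u * b i.
have z_hom i : z i \in deg (p + q i - 1) by rewrite rpredD // addrAC (dga_homM HA).
have dz i : d (z i) = a' * b i.
  by rewrite linearD /= dxi (d_mulr_closed u_hom (db i)) -ea -mulrDl subrKC.
have [_ M_z] := shift_defining_by_mul_b sp u_hom xi_hom b_hom.
have [E [_ ME]] := shift_defining_by_mul_a sp a'p da' z_hom v_hom dz ev.
exists (massey_elt p q b' (fun i => z i + a' * v i)); split.
  exists (fun i => z i + a' * v i); split=> [i|]; last split=> // i.
    by rewrite rpredD // -addrA (dga_homM HA).
  by rewrite linearD /= dz (d_mull_closed_even _ sp a'p da') -ev -mulrDr subrKC.
by exists (w - E); rewrite linearB /= -ew -ME M_z opprB addrA subrK.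
Qed.

Lemma in_massey_shift_iff n p (q : 'I_n -> int) (a a' u : A) (b b' v : 'I_n -> A) c :
  sgnz p = 1 :> R -> a \in deg p -> d a = 0 -> a' \in deg p -> d a' = 0 ->
  (forall i, b i \in deg (q i)) -> (forall i, d (b i) = 0) ->
  (forall i, b' i \in deg (q i)) -> (forall i, d (b' i) = 0) ->
  u \in deg (p - 1) -> a' - a = d u ->
  (forall i, v i \in deg (q i - 1)) -> (forall i, b' i - b i = d (v i)) ->
  in_massey deg d p q a' b' c <-> in_massey deg d p q a b c.
Proof.
move=> sp a_hom da a'_hom da' b_hom db b'_hom db' u_hom eu v_hom ev.
split; last exact: in_massey_shift sp a'_hom da' b_hom db u_hom eu v_hom ev.
have Nu_hom : - u \in deg (p - 1) by rewrite rpredN.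
have Nv_hom i : - v i \in deg (q i - 1) by rewrite rpredN.
apply: in_massey_shift sp a_hom da b'_hom db' Nu_hom _ Nv_hom _ => [|i].
  by rewrite raddfN /= -eu opprB.
by rewrite raddfN /= -ev opprB.
Qed.

End DGA.

Theorem lemma2p5 (R : realType) (A : algType R) (deg : int -> pred A)
    (d : A -> A) (HA : is_dga deg d)
    (n : nat) (p : int) (q : 'I_n -> int)
    (a a' : A) (b b' : 'I_n -> A) :
  ~~ odd `|p|%N ->
  a \in deg p -> closed_el d a ->
  (forall i, b i \in deg (q i)) -> (forall i, closed_el d (b i)) ->
  (forall i, exact_el d (a * b i)) ->
  a' \in deg p -> closed_el d a' -> cohomologous d a' a ->
  (forall i, b' i \in deg (q i)) -> (forall i, closed_el d (b' i)) ->
  (forall i, cohomologous d (b' i) (b i)) ->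
  (forall i, exact_el d (a' * b' i)) /\
  (forall c : A, in_massey deg d p q a' b' c <-> in_massey deg d p q a b c).
Proof.
move=> /(sgnz_even R) sp a_hom da b_hom db exact_ab a'_hom da' [w ea] b'_hom db' eb.
have [u u_hom eu] := cohomologous_hom_primitive HA a'_hom a_hom ea.
have /fin_all_exists [v v_prop] :
    forall i, exists v, v \in deg (q i - 1) /\ b' i - b i = d v.
  move=> i; have [w' ew'] := eb i.
  by have [v] := cohomologous_hom_primitive HA (b'_hom i) (b_hom i) ew'; exists v.
have v_hom i := (v_prop i).1; have ev i := (v_prop i).2.
split=> [i|c].
  exact: exact_mul_shift sp a'_hom da' (db i) u_hom eu (ev i) (exact_ab i).
exact: in_massey_shift_iff sp a_hom da a'_hom da' b_hom db b'_hom db' u_hom eu v_hom ev.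
Qed.
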